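(* Let $G$ be a completable graph and let $A(G),B(G)$ be $G$-partial matrices with $0<B(G)<A(G)$. Then $$\mathfrak{p}^+[A(G)-B(G)]=\big(\mathfrak{p}^+[A(G)]-\mathfrak{p}^+[B(G)]\big)\cap\mathbb{P},$$ where $\mathfrak{p}^+[A(G)]-\mathfrak{p}^+[B(G)]=\{M-N:M\in\mathfrak{p}^+[A(G)],N\in\mathfrak{p}^+[B(G)]\}$.
   Context: A graph $G=(V,E)$ is a finite undirected graph on $V=\{1,\dots,n\}$ containing all loops. A $G$-partial matrix has entries specified exactly for $\{i,j\}\in E$; a completion is an $n\times n$ matrix agreeing with it on $E$. Sums and differences of $G$-partial matrices are taken entrywise on $E$. A $G$-partial matrix $[a_{ij}]_G$ is partial positive definite if $a_{ji}=\overline{a_{ij}}$ on $E$ and every principal submatrix indexed by a clique of $G$ is positive definite. For $G$-partial Hermitian matrices, $C(G)>D(G)$ means $C(G)-D(G)$ is partial positive definite (so $0<B(G)$ means $B(G)$ is partial positive definite). $G$ is completable if every $G$-partial positive semidefinite matrix has a positive semidefinite completion (equivalently $G$ chordal). $\mathfrak{p}^+[\cdot]$ denotes the set of positive definite completions, and $\mathbb{P}$ the set of $n\times n$ positive definite matrices. *)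

From mathcomp Require Import all_boot all_order all_algebra.
Set Implicit Arguments. Unset Strict Implicit. Unset Printing Implicit Defensive.
Import Order.TTheory GRing.Theory Num.Theory.
Local Open Scope ring_scope.

(* Scalars: an arbitrary numClosedFieldType C (e.g. the complex numbers);
   the order on C is the partial order where 0 < z iff z is real positive. *)

Definition ctr (C : numClosedFieldType) m k (M : 'M[C]_(m, k)) : 'M[C]_(k, m) :=
  (map_mx Num.conj M)^T.

Definition hermitian (C : numClosedFieldType) k (M : 'M[C]_k) : Prop :=
  ctr M = M.

Definition posdef (C : numClosedFieldType) k (M : 'M[C]_k) : Prop :=
  hermitian M /\ forall x : 'cV[C]_k, x != 0 -> 0 < (ctr x *m M *m x) 0 0.

Definition possemidef (C : numClosedFieldType) k (M : 'M[C]_k) : Prop :=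
  hermitian M /\ forall x : 'cV[C]_k, 0 <= (ctr x *m M *m x) 0 0.

(* A graph on 'I_n is a relation e (assumed symmetric and reflexive).
   A G-partial matrix is represented by a function a : 'I_n -> 'I_n -> C of
   which only the entries a i j with e i j are meaningful; all notions below
   only inspect those entries. *)
Definition pmatrix (C : numClosedFieldType) (n : nat) := 'I_n -> 'I_n -> C.

Definition psub (C : numClosedFieldType) n (a b : pmatrix C n) : pmatrix C n :=
  fun i j => a i j - b i j.

Definition clique n (e : rel 'I_n) (S : {set 'I_n}) : Prop :=
  forall i j, i \in S -> j \in S -> e i j.

Definition prin_sub (C : numClosedFieldType) n (a : pmatrix C n) (S : {set 'I_n})
  : 'M[C]_#|S| := \matrix_(i < #|S|, j < #|S|) a (enum_val i) (enum_val j).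

Definition partial_pd (C : numClosedFieldType) n (e : rel 'I_n) (a : pmatrix C n)
  : Prop :=
  (forall i j, e i j -> a j i = Num.conj (a i j)) /\
  forall S : {set 'I_n}, clique e S -> posdef (prin_sub a S).

Definition partial_psd (C : numClosedFieldType) n (e : rel 'I_n) (a : pmatrix C n)
  : Prop :=
  (forall i j, e i j -> a j i = Num.conj (a i j)) /\
  forall S : {set 'I_n}, clique e S -> possemidef (prin_sub a S).

Definition completion (C : numClosedFieldType) n (e : rel 'I_n) (a : pmatrix C n)
  (M : 'M[C]_n) : Prop := forall i j, e i j -> M i j = a i j.

(* membership in p^+[a]: the positive definite completions of a *)
Definition pd_completion (C : numClosedFieldType) n (e : rel 'I_n) (a : pmatrix C n)
  (M : 'M[C]_n) : Prop := completion e a M /\ posdef M.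

Definition completable (C : numClosedFieldType) n (e : rel 'I_n) : Prop :=
  forall a : pmatrix C n, partial_psd e a ->
    exists M : 'M[C]_n, completion e a M /\ possemidef M.

(* The inclusion from right to left is entrywise: if P and Q complete A and B, then
   P - Q completes A - B.  Conversely, if M is a positive definite completion of
   A - B and Q is any positive definite completion of B, then M + Q is a positive
   definite completion of A.  Such a Q exists because G is completable: choose
   eps > 0 below every eigenvalue of every clique submatrix of B; then B - eps I
   is partial positive semidefinite, so it has a positive semidefinite completion
   N, and N + eps I is a positive definite completion of B. *)
From mathcomp Require Import all_boot all_order all_algebra.
From mathcomp Require Import sesquilinear spectral.
(* Imported last, so that its [hermitian] shadows the one of sesquilinear. *)
Set Implicit Arguments. Unset Strict Implicit. Unset Printing Implicit Defensive.
Import GRing.Theory Order.Theory Num.Theory Num.Def.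
Local Open Scope ring_scope.
Local Open Scope sesquilinear_scope.

Section PositiveDefinite.
Variable C : numClosedFieldType.

Lemma ctr_trmxC m k (M : 'M[C]_(m, k)) : ctr M = M ^t*.
Proof. by apply/matrixP=> i j; rewrite !mxE. Qed.

Lemma ctr_mul m k l (M : 'M[C]_(m, k)) (N : 'M[C]_(k, l)) :
  ctr (M *m N) = ctr N *m ctr M.
Proof. by rewrite /ctr map_mxM trmx_mul. Qed.

Lemma ctrD m k (M N : 'M[C]_(m, k)) : ctr (M + N) = ctr M + ctr N.
Proof. by apply/matrixP=> i j; rewrite !mxE rmorphD. Qed.

Lemma ctrB m k (M N : 'M[C]_(m, k)) : ctr (M - N) = ctr M - ctr N.
Proof. by apply/matrixP=> i j; rewrite !mxE rmorphB. Qed.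

Lemma ctr_scalar k (a : C) : a \is Num.real -> ctr (a%:M : 'M_k) = a%:M.
Proof.
move=> a_real; apply/matrixP=> i j; rewrite !mxE eq_sym.
by case: (i == j); rewrite ?mulr1n ?mulr0n ?rmorph0 // conj_Creal.
Qed.

Lemma ctr_unitarymx k (P : 'M[C]_k) : P \is unitarymx -> ctr P *m P = 1%:M.
Proof.
move=> P_unitary; rewrite ctr_trmxC -invmx_unitary //.
exact/mulVmx/unitarymx_unit.
Qed.

Lemma hermitian_hermsymmx k (M : 'M[C]_k) : hermitian M -> M \is hermsymmx.
Proof.
rewrite /hermitian ctr_trmxC => M_herm; apply/is_hermitianmxP.
by rewrite expr0 scale1r M_herm.
Qed.

Lemma ctr_mul_self k (x : 'cV[C]_k) : (ctr x *m x) 0 0 = \sum_i `|x i 0| ^+ 2.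
Proof. by rewrite mxE; apply: eq_bigr => i _; rewrite !mxE normCK mulrC. Qed.

Lemma ctr_mul_self_gt0 k (x : 'cV[C]_k) : x != 0 -> 0 < (ctr x *m x) 0 0.
Proof.
move=> x_neq0; rewrite ctr_mul_self lt_def sumr_ge0 ?andbT; last first.
  by move=> i _; rewrite exprn_ge0.
apply/eqP=> /psumr_eq0P x_eq0; move/eqP: x_neq0; apply; apply/matrixP=> i j.
rewrite ord1 mxE; apply/eqP; rewrite -normr_eq0 -[_ == 0](expf_eq0 _ 2).
by rewrite x_eq0 // => l _; rewrite exprn_ge0.
Qed.

Lemma qformD k (M N : 'M[C]_k) (x : 'cV[C]_k) :
  (ctr x *m (M + N) *m x) 0 0 = (ctr x *m M *m x) 0 0 + (ctr x *m N *m x) 0 0.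
Proof. by rewrite mulmxDr mulmxDl mxE. Qed.

Lemma qformB k (M N : 'M[C]_k) (x : 'cV[C]_k) :
  (ctr x *m (M - N) *m x) 0 0 = (ctr x *m M *m x) 0 0 - (ctr x *m N *m x) 0 0.
Proof.
rewrite mulmxBr mulmxBl.
by move: (ctr x *m M *m x) (ctr x *m N *m x) => P Q; rewrite !mxE.
Qed.

Lemma qform_scalar k (a : C) (x : 'cV[C]_k) :
  (ctr x *m a%:M *m x) 0 0 = a * (ctr x *m x) 0 0.
Proof. by rewrite mul_mx_scalar -scalemxAl mxE. Qed.

Lemma posdefD k (M N : 'M[C]_k) : posdef M -> posdef N -> posdef (M + N).
Proof.
move=> [M_herm M_pos] [N_herm N_pos]; split.
  by rewrite /hermitian ctrD M_herm N_herm.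
by move=> x x_neq0; rewrite qformD addr_gt0 ?M_pos ?N_pos.
Qed.

Lemma possemidef_add_scalar k (N : 'M[C]_k) (eps : C) :
  possemidef N -> 0 < eps -> posdef (N + eps%:M).
Proof.
move=> [N_herm N_nneg] eps_gt0; split.
  by rewrite /hermitian ctrD N_herm ctr_scalar // gtr0_real.
move=> x x_neq0; rewrite qformD qform_scalar ltr_wpDl ?N_nneg //.
by rewrite mulr_gt0 ?ctr_mul_self_gt0.
Qed.

Lemma hermitian_spectral k (K : 'M[C]_k) : hermitian K ->
  K = ctr (spectralmx K) *m diag_mx (spectral_diag K) *m spectralmx K.
Proof.
move=> /hermitian_hermsymmx /hermitian_normalmx /orthomx_spectralP K_eq.
by rewrite {1}K_eq invmx_unitary ?spectral_unitarymx // ctr_trmxC.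
Qed.

Lemma qform_spectral k (K : 'M[C]_k) (x : 'cV[C]_k) : hermitian K ->
  (ctr x *m K *m x) 0 0 =
  \sum_i spectral_diag K 0 i * `|(spectralmx K *m x) i 0| ^+ 2.
Proof.
move=> K_herm; rewrite {1}(hermitian_spectral K_herm) !mulmxA -ctr_mul.
rewrite -mulmxA mxE; apply: eq_bigr => i _.
rewrite mxE (bigD1 i) //= big1 ?addr0; last first.
  by move=> j /negbTE j_neq_i; rewrite !mxE j_neq_i mulr0n mulr0.
by rewrite !mxE eqxx mulr1n normCK mulrAC mulrC [conjC _ * _]mulrC.
Qed.

Lemma posdef_spectral_diag_gt0 k (K : 'M[C]_k) i :
  posdef K -> 0 < spectral_diag K 0 i.
Proof.
move=> [K_herm K_pos]; set P := spectralmx K.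
have P_unit : P \in unitmx by exact: spectral_unit.
pose x : 'cV[C]_k := invmx P *m delta_mx i 0.
have Px : P *m x = delta_mx i 0 by rewrite mulmxA mulmxV // mul1mx.
have x_neq0 : x != 0.
  apply/eqP=> x_eq0; move: Px; rewrite x_eq0 mulmx0 => /matrixP /(_ i 0).
  by rewrite !mxE !eqxx /= => /esym/eqP; rewrite oner_eq0.
have := K_pos x x_neq0; rewrite qform_spectral // -/P Px (bigD1 i) //= big1 ?addr0.
  by rewrite mxE !eqxx /= normr1 expr1n mulr1.
by move=> j /negbTE j_neq_i; rewrite mxE j_neq_i /= normr0 expr0n /= mulr0.
Qed.

Lemma possemidef_sub_scalar k (K : 'M[C]_k) (eps : C) :
  hermitian K -> eps \is Num.real -> (forall i, eps <= spectral_diag K 0 i) ->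
  possemidef (K - eps%:M).
Proof.
move=> K_herm eps_real eps_le; split.
  by rewrite /hermitian ctrB K_herm ctr_scalar.
move=> x; rewrite qformB qform_scalar subr_ge0.
have norm_x : (ctr x *m x) 0 0 = \sum_i `|(spectralmx K *m x) i 0| ^+ 2.
  rewrite -ctr_mul_self ctr_mul mulmxA -[ctr x *m _ *m _]mulmxA.
  by rewrite ctr_unitarymx ?spectral_unitarymx // mulmx1.
rewrite qform_spectral // norm_x mulr_sumr; apply: ler_sum => i _.
by rewrite ler_wpM2r ?exprn_ge0.
Qed.

End PositiveDefinite.

Lemma exists_uniform_lower_bound (R : numFieldType) (I : finType) (P : I -> Prop)
  (f : I -> R) : (forall i, P i -> 0 < f i) ->
  exists2 eps, 0 < eps & forall i, P i -> eps <= f i.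
Proof.
(* The order of R may be partial, so a minimum is replaced by 1 / (1 + tot). *)
move=> f_gt0; pose tot := \sum_i `|f i|^-1.
have tot_ge0 : 0 <= tot by apply: sumr_ge0 => i _; rewrite invr_ge0.
exists (1 + tot)^-1; first by rewrite invr_gt0 ltr_wpDr.
move=> i Pi; have fi_gt0 := f_gt0 i Pi.
rewrite -[f i]invrK lef_pV2 ?posrE ?invr_gt0 ?ltr_wpDr //.
rewrite -[(f i)^-1]add0r lerD // -(gtr0_norm fi_gt0) /tot (bigD1 i) //=.
by rewrite lerDl sumr_ge0 // => j _; rewrite invr_ge0.
Qed.

Section PartialMatrices.
Variables (C : numClosedFieldType) (n : nat) (e : rel 'I_n).

Definition pscalar (a : C) : pmatrix C n := fun i j => (i == j)%:R * a.

Lemma prin_sub_psub_scalar (b : pmatrix C n) (a : C) (S : {set 'I_n}) :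
  prin_sub (psub b (pscalar a)) S = prin_sub b S - a%:M.
Proof.
by apply/matrixP=> i j; rewrite !mxE /psub /pscalar (inj_eq enum_val_inj) mulr_natl.
Qed.

Lemma completion_scalar (a : C) : completion e (pscalar a) a%:M.
Proof. by move=> i j _; rewrite mxE /pscalar mulr_natl. Qed.

Lemma completion_add (a b : pmatrix C n) (M N : 'M[C]_n) :
  completion e (psub a b) M -> completion e b N -> completion e a (M + N).
Proof. by move=> cM cN i j eij; rewrite mxE cM // cN // /psub subrK. Qed.

Lemma completion_sub (a b : pmatrix C n) (M N : 'M[C]_n) :
  completion e a M -> completion e b N -> completion e (psub a b) (M - N).
Proof. by move=> cM cN i j eij; rewrite !mxE cM // cN. Qed.

Lemma partial_pd_sub_scalar (b : pmatrix C n) (eps : C) :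
  partial_pd e b -> eps \is Num.real ->
  (forall S, clique e S -> forall i, eps <= spectral_diag (prin_sub b S) 0 i) ->
  partial_psd e (psub b (pscalar eps)).
Proof.
move=> [b_herm b_pd] eps_real eps_le; split.
  move=> i j eij; rewrite /psub /pscalar b_herm // eq_sym rmorphB rmorphM rmorph_nat.
  by congr (_ - _ * _); exact: esym (conj_Creal eps_real).
move=> S S_clique; rewrite prin_sub_psub_scalar.
exact: possemidef_sub_scalar (b_pd S S_clique).1 eps_real (eps_le S S_clique).
Qed.

Lemma completable_pd_completion (b : pmatrix C n) :
  completable C e -> partial_pd e b -> exists M, pd_completion e b M.
Proof.
move=> e_compl b_pd.
pose eig (p : {S : {set 'I_n} & 'I_#|S|}) :=
  spectral_diag (prin_sub b (tag p)) 0 (tagged p).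
have [eps eps_gt0 eps_le] :
    exists2 eps, 0 < eps & forall p, clique e (tag p) -> eps <= eig p.
  apply: exists_uniform_lower_bound => p S_clique.
  exact/posdef_spectral_diag_gt0/(b_pd.2 _ S_clique).
have [|N [cN N_psd]] := e_compl (psub b (pscalar eps)).
  apply: partial_pd_sub_scalar; rewrite ?gtr0_real // => S S_clique i.
  exact: (eps_le (Tagged _ i)).
exists (N + eps%:M); split; first exact: completion_add cN (completion_scalar eps).
exact: possemidef_add_scalar.
Qed.

End PartialMatrices.

Theorem theorem5p5 (C : numClosedFieldType) (n : nat) (e : rel 'I_n)
  (e_refl : reflexive e) (e_sym : symmetric e)
  (e_compl : completable C e) (A B : pmatrix C n)
  (hB : partial_pd e B) (hAB : partial_pd e (psub A B)) :
  forall M : 'M[C]_n,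
    pd_completion e (psub A B) M <->
    ((exists P Q : 'M[C]_n,
        pd_completion e A P /\ pd_completion e B Q /\ M = P - Q)
     /\ posdef M).
Proof.
move=> M; split.
  move=> [cM M_pd]; split=> //.
  have [Q [cQ Q_pd]] := completable_pd_completion e_compl hB.
  exists (M + Q), Q; split; last by split=> //; rewrite addrK.
  by split; [exact: completion_add cM cQ | exact: posdefD].
move=> [[P [Q [[cP _] [[cQ _] ->]]]] M_pd]; split=> //.
exact: completion_sub.
Qed.
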